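(* Let $n\ge 3$ and let $\mathcal{A}$ be an arrangement of $(n-2)$-planes in $\mathbb{P}^n$ whose incidence graph $\Gamma(\mathcal{A})$ is isomorphic to the complete bipartite graph $K_{a,b}$, where $a,b$ are positive integers with $a\le b\le 2$ or $2\le a\le b$. Then $\mathcal{A}$ is a cone over an arrangement $\mathcal{B}$ of lines in $\mathbb{P}^3$ with $\Gamma(\mathcal{B})\cong K_{a,b}$; that is, there exist an $(n-4)$-dimensional linear subspace $V\subset\mathbb{P}^n$, a $3$-dimensional linear subspace $\Lambda\subset\mathbb{P}^n$ with $V\cap\Lambda=\emptyset$ (so $\Lambda\cong\mathbb{P}^3$), and an arrangement $\mathcal{B}$ of lines in $\Lambda$ with $\Gamma(\mathcal{B})\cong K_{a,b}$, such that $\mathcal{A}=\{\operatorname{span}(V\cup \ell) : \ell\in\mathcal{B}\}$.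
   Context: A subspace arrangement is a finite collection of linear subspaces of a projective space with no inclusions among distinct members. The incidence graph $\Gamma(\mathcal{A})$ has vertex set $\mathcal{A}$ and an edge between $X\ne Y$ iff $\dim(X\cap Y)$ exceeds the expected dimension, which for two $(n-2)$-planes in $\mathbb{P}^n$ is $n-4$ (the empty set has dimension $-1$; so for lines in $\mathbb{P}^3$ an edge means the two lines meet). $K_{a,b}$ is the complete bipartite graph with parts of sizes $a$ and $b$. For $n=3$, $V$ is empty. *)

(* projective subspaces of P^n over a field k are modelled as
   linear subspaces ({vspace _}) of k^(n+1) = 'rV[k]_(n.+1); a projective
   subspace of projective dimension d is a vspace of (vector) dimension d+1. *)
From HB Require Import structures.
From mathcomp Require Import all_boot all_order all_algebra.
Set Implicit Arguments. Unset Strict Implicit. Unset Printing Implicit Defensive.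
Import GRing.Theory.
Local Open Scope ring_scope.

Definition arrangement (k : fieldType) (vT : vectType k) (I : finType)
  (A : I -> {vspace vT}) : Prop :=
  forall i j : I, i != j -> ~~ (A i <= A j)%VS.

Definition Kab_edge (a b : nat) (i j : 'I_a + 'I_b) : bool :=
  match i, j with
  | inl _, inr _ => true
  | inr _, inl _ => true
  | _, _ => false
  end.

(* The incidence graph of A (indexed by the vertices of K_{a,b}) is K_{a,b}
   via this indexing: for distinct i, j, the (projective) dimension of
   A i ∩ A j exceeds the expected one iff i j is an edge of K_{a,b}.
   Here [e] is the expected dimension expressed as a VECTOR dimension bound:
   projective dim (\dim - 1) > expected projective dim (e - 1) iff \dim > e. *)
Definition incidence_is_Kab (k : fieldType) (vT : vectType k) (a b : nat)
  (e : nat) (A : 'I_a + 'I_b -> {vspace vT}) : Prop :=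
  forall i j : 'I_a + 'I_b, i != j ->
    ((e < \dim (A i :&: A j))%N <-> Kab_edge i j).

From HB Require Import structures.
From mathcomp Require Import all_boot all_order all_algebra.
From mathcomp Require Import zify.

(* Two distinct members on the same side of K_{a,b} are not incident, so by
   Grassmann they meet exactly in an (n-4)-plane W, and every member of the other
   side, meeting both in excess dimension, contains W.  When both sides have at
   least two members the two sides produce the same W, which is thus common to
   all members; for K_{1,2} and K_{1,1} this is immediate.  Intersecting with a
   complement of W cuts A down to lines in a P^3 with the same incidences, and A
   is the cone over them with vertex W. *)

Set Implicit Arguments.
Unset Strict Implicit.
Unset Printing Implicit Defensive.

Section SubspaceDimensions.
Variables (k : fieldType) (vT : vectType k).
Implicit Types U V W X : {vspace vT}.

Lemma exists_subv_dim U m : m <= \dim U -> exists V, \dim V = m /\ (V <= U)%VS.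
Proof.
move=> le_mU; exists <<take m (vbasis U)>>%VS; split.
  have free_take : free (take m (vbasis U)).
    apply: (catl_free (Y := drop m (vbasis U))); rewrite cat_take_drop.
    exact: basis_free (vbasisP U).
  by rewrite (eqP free_take) size_take size_tuple; case: ltnP; lia.
by apply/span_subvP => x /mem_take; apply: vbasis_mem.
Qed.

Lemma dimv_add_leq_cap U W : \dim U + \dim W <= \dim (U :&: W) + \dim {:vT}.
Proof. by rewrite -dimv_sum_cap addnC leq_add2l dimvS ?subvf. Qed.

(* Grassmann's formula inside [X] forces [X :&: (U :&: W)] to be as large as
   [U :&: W]. *)
Lemma dimv_cap_subv U W X :
  \dim (U :&: W) + \dim X <= \dim (X :&: U) + \dim (X :&: W) ->
  (U :&: W <= X)%VS.
Proof.
move=> dimXUW.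
have le_sum_X : \dim (X :&: U + X :&: W) <= \dim X.
  by apply: dimvS; rewrite subv_add !capvSl.
have cap_traces : ((X :&: U) :&: (X :&: W) = X :&: (U :&: W))%VS.
  by apply/vspaceP => x; rewrite !memv_cap andbACA andbb.
have := dimv_sum_cap (X :&: U) (X :&: W); rewrite cap_traces => sum_cap.
have /eqP <- : (X :&: (U :&: W) == U :&: W)%VS by rewrite eqEdim capvSr /=; lia.
by rewrite capvSl.
Qed.

Lemma dimv_cap_complS V X : (V <= X)%VS -> \dim (X :&: V^C) = \dim X - \dim V.
Proof.
move=> sVX; have := dimv_sum_cap X V^C.
have -> : (X + V^C = fullv)%VS.
  by apply/eqP; rewrite eqEsubv subvf -(addv_complf V) addvS.
by rewrite dimv_compl; have := dimvS (subvf V); lia.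
Qed.

Lemma addv_cap_complS V X : (V <= X)%VS -> (V + X :&: V^C = X)%VS.
Proof.
move=> sVX; apply/eqP; rewrite eqEdim subv_add sVX capvSl /=.
have VB0 : (V :&: (X :&: V^C) = 0)%VS.
  by apply/eqP; rewrite -subv0 -(capv_compl V) capvS ?capvSr.
by have := dimv_sum_cap V (X :&: V^C); rewrite VB0 dimv0 dimv_cap_complS //; lia.
Qed.

End SubspaceDimensions.

Section Cone.
Variables (k : fieldType) (vT : vectType k) (I : finType).
Variables (A : I -> {vspace vT}) (V : {vspace vT}).
Hypothesis sVA : forall i, (V <= A i)%VS.

Lemma arrangement_cap_compl : arrangement A -> arrangement (fun i => A i :&: V^C)%VS.
Proof.
move=> arrA i j ij; apply: contra (arrA i j ij) => sBij.
by rewrite -(addv_cap_complS (sVA i)) -(addv_cap_complS (sVA j)) addvS.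
Qed.

Lemma dimv_cap_cap_compl i j :
  \dim ((A i :&: V^C) :&: (A j :&: V^C)) = \dim (A i :&: A j) - \dim V.
Proof.
have -> : ((A i :&: V^C) :&: (A j :&: V^C) = (A i :&: A j) :&: V^C)%VS.
  by apply/vspaceP => x; rewrite !memv_cap andbACA andbb.
by rewrite dimv_cap_complS // subv_cap !sVA.
Qed.

End Cone.

Lemma incidence_cap_compl (k : fieldType) (vT : vectType k) a b
    (A : 'I_a + 'I_b -> {vspace vT}) (V : {vspace vT}) e :
  (forall i, V <= A i)%VS -> incidence_is_Kab (\dim V + e) A ->
  incidence_is_Kab e (fun i => A i :&: V^C)%VS.
Proof.
move=> sVA incA i j ij; rewrite -(incA i j ij) dimv_cap_cap_compl //.
have := dimvS (capvS (sVA i) (sVA j)); rewrite capvv; lia.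
Qed.

Lemma Kab_edge_neq a b (i j : 'I_a + 'I_b) : Kab_edge i j -> i != j.
Proof. by apply: contraTneq => ->; case: j. Qed.

Section KabArrangement.
Variables (k : fieldType) (vT : vectType k) (n a b : nat).
Variable A : 'I_a + 'I_b -> {vspace vT}.
Hypotheses (n_ge3 : 3 <= n) (dim_full : \dim {:vT} = n.+1).
Hypotheses (dimA : forall i, \dim (A i) = n - 1) (incA : incidence_is_Kab (n - 3) A).

Lemma dim_cap_nonadjacent i j :
  i != j -> ~~ Kab_edge i j -> \dim (A i :&: A j) = n - 3.
Proof.
move=> ij nij; have := dimv_add_leq_cap (A i) (A j); rewrite !dimA dim_full.
suff : ~~ (n - 3 < \dim (A i :&: A j)) by lia.
by apply: contra nij => /(incA ij).
Qed.

Lemma cap_nonadjacent_subv i j x : i != j -> ~~ Kab_edge i j ->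
  Kab_edge x i -> Kab_edge x j -> (A i :&: A j <= A x)%VS.
Proof.
move=> ij nij xi xj; apply: dimv_cap_subv.
have := (incA (Kab_edge_neq xi)).2 xi; have := (incA (Kab_edge_neq xj)).2 xj.
by rewrite (dim_cap_nonadjacent ij nij) dimA; lia.
Qed.

Lemma cap_left_eq_cap_right (l l' : 'I_a) (r r' : 'I_b) : l != l' -> r != r' ->
  (A (inl l) :&: A (inl l') = A (inr r) :&: A (inr r'))%VS.
Proof.
move=> ll' rr'; apply/eqP.
by rewrite eqEdim subv_cap !cap_nonadjacent_subv //= !dim_cap_nonadjacent.
Qed.

Lemma exists_common_subv : 0 < a -> 0 < b -> (a <= b <= 2) \/ (2 <= a <= b) ->
  exists V, \dim V = n - 3 /\ forall i, (V <= A i)%VS.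
Proof.
move=> a_gt0 b_gt0 ab_cases; pose l0 := Ordinal a_gt0; pose r0 := Ordinal b_gt0.
have [b_gt1 | b_le1] := ltnP 1 b.
  pose r1 := Ordinal b_gt1; pose V := (A (inr r0) :&: A (inr r1))%VS.
  exists V; split; first exact: dim_cap_nonadjacent.
  case=> [l | r]; first exact: cap_nonadjacent_subv.
  have [a_gt1 | a_le1] := ltnP 1 a.
    rewrite /V -(cap_left_eq_cap_right (l' := Ordinal a_gt1) (l := l0)) //.
    exact: cap_nonadjacent_subv.
  have /orP[] : (r == 0 :> nat) || (r == 1 :> nat).
    by have := ltn_ord r; case: ab_cases; lia.
    by move=> /eqP r_0; rewrite (_ : r = r0) ?capvSl //; apply: ord_inj.
  by move=> /eqP r_1; rewrite (_ : r = r1) ?capvSr //; apply: ord_inj.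
have [|V [dimV sVA]] := @exists_subv_dim _ _ (A (inl l0) :&: A (inr r0))%VS (n - 3).
  by apply: ltnW; apply/(@incA (inl l0) (inr r0)).
exists V; split => // -[l | r].
  rewrite (_ : l = l0); first exact: subv_trans sVA (capvSl _ _).
  by apply: ord_inj => /=; have := ltn_ord l; case: ab_cases; lia.
rewrite (_ : r = r0); first exact: subv_trans sVA (capvSr _ _).
by apply: ord_inj => /=; have := ltn_ord r; lia.
Qed.

End KabArrangement.

Local Open Scope ring_scope.

Theorem lemma2p2 (k : fieldType) (n a b : nat)
  (A : 'I_a + 'I_b -> {vspace 'rV[k]_(n.+1)}) :
  (3 <= n)%N ->
  (0 < a)%N -> (0 < b)%N ->
  ((a <= b <= 2)%N \/ (2 <= a <= b)%N) ->
  (forall i, \dim (A i) = (n - 1)%N) ->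
  arrangement A ->
  incidence_is_Kab (n - 3) A ->
  exists (V Lam : {vspace 'rV[k]_(n.+1)})
         (B : 'I_a + 'I_b -> {vspace 'rV[k]_(n.+1)}),
    [/\ \dim V = (n - 3)%N, \dim Lam = 4%N & (V :&: Lam = 0)%VS] /\
    [/\ (forall j, \dim (B j) = 2%N /\ (B j <= Lam)%VS),
        arrangement B, incidence_is_Kab 0 B &
        (forall X, (exists i, X = A i) <-> (exists j, X = (V + B j)%VS))].
Proof.
move=> n_ge3 a_gt0 b_gt0 ab_cases dimA arrA incA.
have dim_full : \dim {:'rV[k]_(n.+1)} = n.+1 by rewrite dimvf dim_matrix GRing.mul1r.
have [V [dimV sVA]] := exists_common_subv n_ge3 dim_full dimA incA a_gt0 b_gt0 ab_cases.
exists V, V^C%VS, (fun i => A i :&: V^C)%VS; split.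
  by split; rewrite ?capv_compl // dimv_compl dim_full dimV; lia.
split.
- by move=> i; rewrite dimv_cap_complS // dimA dimV capvSr; split => //; lia.
- exact: arrangement_cap_compl.
- by apply: incidence_cap_compl; rewrite // dimV addn0.
- by move=> X; split=> -[i ->]; exists i; rewrite addv_cap_complS.
Qed.
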